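(* Let a nondegenerate triangle be circumscribed about a central conic one of whose foci coincides with the circumcenter of the triangle. Then the triangle is acute if and only if the conic is an ellipse, and it is obtuse if and only if the conic is a hyperbola.
   Context: A central conic is a non-degenerate ellipse or hyperbola. A triangle is circumscribed about a conic if each of its three sidelines is tangent to the conic. *)

From HB Require Import structures.
From mathcomp Require Import all_boot all_order all_algebra.
From mathcomp Require Import reals.
Set Implicit Arguments. Unset Strict Implicit. Unset Printing Implicit Defensive.
Import Order.TTheory GRing.Theory Num.Theory.
Local Open Scope ring_scope.

Section Plane.
Variable R : realType.

Definition point := (R * R)%type.

Definition vsub (P Q : point) : point := (P.1 - Q.1, P.2 - Q.2).
Definition pdot (u v : point) : R := u.1 * v.1 + u.2 * v.2.
Definition pcross (u v : point) : R := u.1 * v.2 - u.2 * v.1.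
Definition pdist (P Q : point) : R := Num.sqrt (pdot (vsub P Q) (vsub P Q)).

Definition nondeg_triangle (A B C : point) : Prop := pcross (vsub B A) (vsub C A) != 0.

Definition is_circumcenter (O A B C : point) : Prop :=
  pdist O A = pdist O B /\ pdist O B = pdist O C.

Definition acute (A B C : point) : Prop :=
  [/\ 0 < pdot (vsub B A) (vsub C A), 0 < pdot (vsub A B) (vsub C B)
    & 0 < pdot (vsub A C) (vsub B C)].
Definition obtuse (A B C : point) : Prop :=
  [\/ pdot (vsub B A) (vsub C A) < 0, pdot (vsub A B) (vsub C B) < 0
    | pdot (vsub A C) (vsub B C) < 0].

(* Central conics given by their foci F1 F2 and semi-(major/transverse) axis a *)
Inductive conic :=
| Ellipse of point & point & R
| Hyperbola of point & point & R.

Definition focus1 (K : conic) : point :=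
  match K with Ellipse F _ _ => F | Hyperbola F _ _ => F end.
Definition focus2 (K : conic) : point :=
  match K with Ellipse _ F _ => F | Hyperbola _ F _ => F end.

Definition is_ellipse (K : conic) : Prop := if K is Ellipse _ _ _ then True else False.
Definition is_hyperbola (K : conic) : Prop := if K is Hyperbola _ _ _ then True else False.

Definition central_conic (K : conic) : Prop :=
  match K with
  | Ellipse F1 F2 a => 0 < a /\ pdist F1 F2 < 2 * a
  | Hyperbola F1 F2 a => 0 < a /\ 2 * a < pdist F1 F2
  end.

Definition on_conic (K : conic) (P : point) : Prop :=
  match K with
  | Ellipse F1 F2 a => pdist P F1 + pdist P F2 = 2 * a
  | Hyperbola F1 F2 a => `|pdist P F1 - pdist P F2| = 2 * a
  end.

Definition unitv (u : point) : point :=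
  let n := Num.sqrt (pdot u u) in (u.1 / n, u.2 / n).

(* normal vector of the conic at P: gradient of the focal defining function
   P |-> pdist P F1 + pdist P F2  (ellipse),  P |-> pdist P F1 - pdist P F2 (hyperbola) *)
Definition conic_normal (K : conic) (P : point) : point :=
  match K with
  | Ellipse F1 F2 _ =>
      let u := unitv (vsub P F1) in let v := unitv (vsub P F2) in (u.1 + v.1, u.2 + v.2)
  | Hyperbola F1 F2 _ =>
      let u := unitv (vsub P F1) in let v := unitv (vsub P F2) in (u.1 - v.1, u.2 - v.2)
  end.

Definition on_line (X Y P : point) : Prop := pcross (vsub Y X) (vsub P X) = 0.

Definition tangent_line (K : conic) (X Y : point) : Prop :=
  X != Y /\ exists P, [/\ on_conic K P, on_line X Y P & pdot (conic_normal K P) (vsub Y X) = 0].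

Definition circumscribed (A B C : point) (K : conic) : Prop :=
  [/\ tangent_line K A B, tangent_line K B C & tangent_line K C A].

End Plane.

From HB Require Import structures.
From mathcomp Require Import all_boot all_order all_algebra.
From mathcomp Require Import reals ring lra.
Set Implicit Arguments. Unset Strict Implicit. Unset Printing Implicit Defensive.
Import Order.TTheory GRing.Theory Num.Theory.
Local Open Scope ring_scope.

(* Reflecting the focus F in a tangent line gives a point at distance 2a from
   the other focus G (the reflection property of the foci), where a is the
   semi-axis. When F is the circumcenter, it projects onto the midpoint of each
   side, so its mirror image in the side AB is A + B - F. Hence
   A + B + C - F - G is at distance 2a from A, B and C; by uniqueness of the
   circumcenter it equals F, so the circumradius is 2a and G = A + B + C - 2F
   is the orthocenter. Finally, writing the circumradius vectors as a, b, c, the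
   product of the dot products at the three vertices has the sign of
   |a|^2 - |a + b + c|^2, because the Gram determinant of three plane vectors
   vanishes; as at most one angle can be non-acute, the triangle is acute iff
   the orthocenter lies inside the circumcircle, i.e. iff |FG| < 2a, the
   ellipse case, and obtuse iff |FG| > 2a, the hyperbola case. *)

Section PlaneGeometry.
Variable R : realType.
Implicit Types (k l : R) (u v w d A B C F G H O P X Y : point R) (K : conic R).

Lemma point_eq u v : u.1 = v.1 -> u.2 = v.2 -> u = v.
Proof. by case: u v => u1 u2 [v1 v2] /= -> ->. Qed.

Definition vscale k u : point R := (k * u.1, k * u.2).

Lemma vsubE P Q : vsub P Q = P - Q. Proof. by []. Qed.

Lemma pdotBl u v w : pdot (u - v) w = pdot u w - pdot v w.
Proof. by rewrite /pdot /=; ring. Qed.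

Lemma pdotZl k u v : pdot (vscale k u) v = k * pdot u v.
Proof. by rewrite /pdot /=; ring. Qed.

Lemma pcrossDl u v w : pcross (u + v) w = pcross u w + pcross v w.
Proof. by rewrite /pcross /=; ring. Qed.

Lemma pcrossZl k u v : pcross (vscale k u) v = k * pcross u v.
Proof. by rewrite /pcross /=; ring. Qed.

Lemma pdot_selfZ k u : pdot (vscale k u) (vscale k u) = k ^+ 2 * pdot u u.
Proof. by rewrite /pdot /=; ring. Qed.

Lemma pdotC u v : pdot u v = pdot v u.
Proof. by rewrite /pdot mulrC [u.2 * _]mulrC. Qed.

Lemma pdot_ge0 u : 0 <= pdot u u.
Proof. by rewrite /pdot -!expr2 addr_ge0 ?sqr_ge0. Qed.

Lemma pdot_eq0 u : (pdot u u == 0) = (u == 0).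
Proof.
case: u => u1 u2; rewrite /pdot /= -!expr2 paddr_eq0 ?sqr_ge0 //.
by rewrite !sqrf_eq0 xpair_eqE.
Qed.

Lemma pdot_gt0 u : (0 < pdot u u) = (u != 0).
Proof. by rewrite lt_def pdot_ge0 pdot_eq0 andbT. Qed.

Lemma pdist_sqr P Q : pdist P Q ^+ 2 = pdot (P - Q) (P - Q).
Proof. exact/sqr_sqrtr/pdot_ge0. Qed.

Lemma pdist_ge0 P Q : 0 <= pdist P Q.
Proof. exact: sqrtr_ge0. Qed.

Lemma pdistC P Q : pdist P Q = pdist Q P.
Proof. by rewrite /pdist /pdot /vsub /=; congr Num.sqrt; ring. Qed.

Lemma pdist_gt0 P Q : (0 < pdist P Q) = (P != Q).
Proof. by rewrite sqrtr_gt0 pdot_gt0 vsubE subr_eq0. Qed.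

Lemma pdistxx P : pdist P P = 0.
Proof. by rewrite /pdist vsubE subrr /pdot /= mulr0 addr0 sqrtr0. Qed.

Lemma pdist_eq_sub P Q P' Q' : P - Q = P' - Q' -> pdist P Q = pdist P' Q'.
Proof. by rewrite /pdist !vsubE => ->. Qed.

Lemma eq_pdist P Q P' Q' :
  (pdist P Q = pdist P' Q') <-> pdot (P - Q) (P - Q) = pdot (P' - Q') (P' - Q').
Proof.
split=> [e|e]; first by rewrite -!pdist_sqr e.
by rewrite /pdist !vsubE e.
Qed.

Lemma orthogonal_noncollinear_eq0 {w u v} :
  pcross u v != 0 -> pdot w u = 0 -> pdot w v = 0 -> w = 0.
Proof.
case: w u v => [w1 w2] [u1 u2] [v1 v2]; rewrite /pcross /pdot /= => nd wu wv.
have e1 : w1 * (u1 * v2 - u2 * v1) = v2 * (w1 * u1 + w2 * u2) - u2 * (w1 * v1 + w2 * v2).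
  by ring.
have e2 : w2 * (u1 * v2 - u2 * v1) = u1 * (w1 * v1 + w2 * v2) - v1 * (w1 * u1 + w2 * u2).
  by ring.
rewrite wu wv !mulr0 subrr in e1 e2.
move: e1 e2 => /eqP; rewrite mulf_eq0 (negbTE nd) orbF => /eqP ->.
by move/eqP; rewrite mulf_eq0 (negbTE nd) orbF => /eqP ->.
Qed.

Lemma dot_cross_eq0 {w d} : d != 0 -> pdot w d = 0 -> pcross w d = 0 -> w = 0.
Proof.
move=> d0 wd wxd; apply: (orthogonal_noncollinear_eq0 (v := (- d.2, d.1)) _ wd).
  by rewrite -pdot_eq0 /pcross /pdot /= in d0 *; rewrite mulrN opprK.
have -> : pdot w (- d.2, d.1) = - pcross w d by rewrite /pdot /pcross /=; ring.
by rewrite wxd oppr0.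
Qed.

(* In the second case [u] and [v] are mirror images in the direction [d]. *)
Lemma eq_norm_dot_cases u v d :
  pdot u u = pdot v v -> pdot u d = pdot v d -> u = v \/ pcross (u + v) d = 0.
Proof.
move=> uv ud; have [->|neq] := eqVneq u v; [by left | right].
apply/eqP; apply: contraNT neq => nd; rewrite -subr_eq0; apply/eqP.
apply: (orthogonal_noncollinear_eq0 nd).
  have -> : pdot (u - v) (u + v) = pdot u u - pdot v v by rewrite /pdot /=; ring.
  by rewrite uv subrr.
by rewrite pdotBl ud subrr.
Qed.

Lemma pdot_equidistant F X Y :
  pdot (F - Y) (F - Y) - pdot (F - X) (F - X) = pdot (X + Y - F - F) (Y - X).
Proof. by rewrite /pdot /=; ring. Qed.

Lemma vscale_sqr_cancel k l u v : k != 0 -> pdot v v = k ^+ 2 ->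
  vscale k u = vscale l v -> pdot u u = l ^+ 2.
Proof.
move=> k0 vk /(congr1 (fun z => pdot z z)); rewrite !pdot_selfZ vk => e.
by apply: (mulfI (expf_neq0 2 k0)); rewrite e mulrC.
Qed.

(* The tangency hypothesis says that the focal radii [P - F] and [P - G] make
   equal angles with [XY], up to the sign [e]; [X + Y - F] is the mirror image
   of [F] in [XY] because [F] projects onto the midpoint of [XY]. *)
Lemma mirror_focus_dist {F G P X Y e} :
  e ^+ 2 = 1 -> P != G -> X != Y -> on_line X Y P ->
  pdist P G * pdot (P - F) (Y - X) + e * pdist P F * pdot (P - G) (Y - X) = 0 ->
  pdist F X = pdist F Y ->
  pdot (G - F) (G - F) != (pdist P G + e * pdist P F) ^+ 2 ->
  pdot (X + Y - F - G) (X + Y - F - G) = (pdist P G + e * pdist P F) ^+ 2.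
Proof.
move=> e2 PG XY onXY tang /eq_pdist eqFXY neFG.
have q0 : pdist P G != 0 by rewrite gt_eqF ?pdist_gt0.
have hU := pdist_sqr P F; have hV := pdist_sqr P G.
move: (pdist P F) (pdist P G) hU hV q0 tang neFG => p q hU hV q0 tang neFG.
have mid0 : pdot (X + Y - F - F) (Y - X) = 0 by rewrite -pdot_equidistant eqFXY subrr.
have lineXP : pcross (X - P) (Y - X) = 0.
  by move: onXY; rewrite /on_line /pcross /=; lra.
have lineYP : pcross (Y - P) (Y - X) = 0.
  by move: lineXP; rewrite /pcross /=; lra.
set d := Y - X in tang mid0 lineXP lineYP *.
have d0 : d != 0 by rewrite subr_eq0 eq_sym.
set x := vscale q (P - F); set y := vscale (- (e * p)) (P - G).
have xd : pdot x d = pdot y d by rewrite !pdotZl; lra.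
have [exy | xyd] : x = y \/ pcross (x + y) d = 0.
  apply: eq_norm_dot_cases xd.
  by rewrite !pdot_selfZ -hU -hV sqrrN exprMn e2 mul1r mulrC.
- exfalso; move/negP: neFG; apply; apply/eqP; rewrite -sqrrN.
  apply: (@vscale_sqr_cancel q _ _ (P - G)) => //.
  have -> : vscale q (G - F) = vscale (- (q + e * p)) (P - G) + (x - y).
    by apply: point_eq; rewrite /x /y /vscale /=; ring.
  by rewrite exy subrr addr0.
set w := vscale q (X + Y - F - G) - vscale (q + e * p) (P - G).
suff w0 : w = 0.
  apply: (@vscale_sqr_cancel q (q + e * p) _ (P - G)) => //.
  by apply/eqP; rewrite -subr_eq0 -/w w0.
apply: (dot_cross_eq0 d0).
  have -> : w = vscale q (X + Y - F - F) - (x - y).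
    by apply: point_eq; rewrite /w /x /y /vscale /=; ring.
  by rewrite pdotBl pdotZl mid0 pdotBl xd subrr mulr0 subrr.
have -> : w = vscale q (X - P + (Y - P)) + (x + y).
  by apply: point_eq; rewrite /w /x /y /vscale /=; ring.
by rewrite pcrossDl pcrossZl pcrossDl lineXP lineYP xyd !addr0 mulr0.
Qed.

Lemma pdot_sub_equidistant O O' X Y :
  2 * pdot (O - O') (Y - X) =
  (pdot (O' - Y) (O' - Y) - pdot (O' - X) (O' - X))
  - (pdot (O - Y) (O - Y) - pdot (O - X) (O - X)).
Proof. by rewrite /pdot /=; ring. Qed.

Lemma circumcenter_unique {O O' A B C} : nondeg_triangle A B C ->
  is_circumcenter O A B C -> is_circumcenter O' A B C -> O = O'.
Proof.
move=> nd [OAB OBC] [O'AB O'BC].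
have perp X Y : pdist O X = pdist O Y -> pdist O' X = pdist O' Y ->
    pdot (O - O') (Y - X) = 0.
  move=> /eq_pdist e /eq_pdist e'; have := pdot_sub_equidistant O O' X Y.
  by rewrite e e' !subrr; lra.
apply/eqP; rewrite -subr_eq0; apply/eqP.
apply: (orthogonal_noncollinear_eq0 nd); apply: perp => //.
- by rewrite OAB.
- by rewrite O'AB.
Qed.

(* [A + B + C - O - O] is the orthocenter of [ABC] (Sylvester's relation). *)
Lemma mirror_circumcenter {O H A B C r} : nondeg_triangle A B C ->
  is_circumcenter O A B C ->
  pdist (A + B - O) H = r -> pdist (B + C - O) H = r -> pdist (C + A - O) H = r ->
  H = A + B + C - O - O /\ pdist O A = r.
Proof.
move=> nd hO hC hA hB; set O' := A + B + C - O - H.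
have O'A : pdist O' A = r.
  by rewrite -hA; apply: pdist_eq_sub; apply: point_eq; rewrite /O' /=; ring.
have O'B : pdist O' B = r.
  by rewrite -hB; apply: pdist_eq_sub; apply: point_eq; rewrite /O' /=; ring.
have O'C : pdist O' C = r.
  by rewrite -hC; apply: pdist_eq_sub; apply: point_eq; rewrite /O' /=; ring.
have eO : O = O'.
  by apply: (circumcenter_unique nd hO); split; rewrite ?O'A ?O'B ?O'C.
split; last by rewrite eO.
by rewrite {2}eO /O'; apply: point_eq => /=; ring.
Qed.

Lemma pdot_vertex_add A B C :
  pdot (vsub B A) (vsub C A) + pdot (vsub A B) (vsub C B) = pdot (B - A) (B - A).
Proof. by rewrite /pdot /=; ring. Qed.

Lemma gram_det_eq0 u v w :
  pdot u u * pdot v v * pdot w w + 2 * pdot v w * pdot w u * pdot u v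
  - pdot u u * pdot v w ^+ 2 - pdot v v * pdot w u ^+ 2 - pdot w w * pdot u v ^+ 2 = 0.
Proof. by rewrite /pdot; ring. Qed.

(* Modulo the three norm equations, the claim is a polynomial multiple of the
   planar Gram determinant of [A - O], [B - O], [C - O], which vanishes. *)
Lemma vertex_dots_prod {O A B C r} :
  pdot (A - O) (A - O) = r -> pdot (B - O) (B - O) = r -> pdot (C - O) (C - O) = r ->
  8 * r * (pdot (vsub B A) (vsub C A) * pdot (vsub A B) (vsub C B)
           * pdot (vsub A C) (vsub B C)) =
  - (pdot (B - A) (B - A) * pdot (C - B) (C - B) * pdot (A - C) (A - C))
    * (pdist O (A + B + C - O - O) ^+ 2 - r).
Proof.
move=> hA hB hC; rewrite pdist_sqr.
have G0 := gram_det_eq0 (A - O) (B - O) (C - O); rewrite hA hB hC in G0.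
move: G0; set x := pdot (B - O) (C - O); set y := pdot (C - O) (A - O).
set z := pdot (A - O) (B - O) => G0.
have eAB : pdot (B - A) (B - A) = pdot (A - O) (A - O) + pdot (B - O) (B - O) - 2 * z.
  by rewrite /z /pdot /=; ring.
have eBC : pdot (C - B) (C - B) = pdot (B - O) (B - O) + pdot (C - O) (C - O) - 2 * x.
  by rewrite /x /pdot /=; ring.
have eCA : pdot (A - C) (A - C) = pdot (C - O) (C - O) + pdot (A - O) (A - O) - 2 * y.
  by rewrite /y /pdot /=; ring.
have eA : pdot (vsub B A) (vsub C A) = pdot (A - O) (A - O) + x - y - z.
  by rewrite /x /y /z /pdot /=; ring.
have eB : pdot (vsub A B) (vsub C B) = pdot (B - O) (B - O) + y - x - z.
  by rewrite /x /y /z /pdot /=; ring.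
have eC : pdot (vsub A C) (vsub B C) = pdot (C - O) (C - O) + z - x - y.
  by rewrite /x /y /z /pdot /=; ring.
have eH : pdot (O - (A + B + C - O - O)) (O - (A + B + C - O - O)) =
          pdot (A - O) (A - O) + pdot (B - O) (B - O) + pdot (C - O) (C - O)
          + 2 * (x + y + z).
  by rewrite /x /y /z /pdot /=; ring.
rewrite eAB eBC eCA eA eB eC eH hA hB hC; apply/eqP; rewrite -subr_eq0; apply/eqP.
rewrite -[RHS](mulr0 (2 * (12 * r - 4 * (x + y + z)))) -G0; ring.
Qed.

Lemma nondeg_triangle_sides {A B C} : nondeg_triangle A B C ->
  [/\ 0 < pdot (B - A) (B - A), 0 < pdot (C - B) (C - B) & 0 < pdot (A - C) (A - C)].
Proof.
move=> nd; rewrite !pdot_gt0 !subr_eq0.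
by split; apply: contraNneq nd => e; apply/eqP; rewrite e /pcross /=; ring.
Qed.

Lemma gt0_of_pairwise_sums (x y z : R) :
  0 < x + y -> 0 < y + z -> 0 < z + x -> 0 < x * y * z -> [/\ 0 < x, 0 < y & 0 < z].
Proof.
move=> xy yz zx xyz.
have [x0|x0] := ltrP 0 x; last first.
  have : 0 < y * z by rewrite mulr_gt0 //; lra.
  nra.
have [y0|y0] := ltrP 0 y; last first.
  have : 0 < x * z by rewrite mulr_gt0 //; lra.
  nra.
have [z0|z0] := ltrP 0 z => //.
have : 0 < x * y by rewrite mulr_gt0.
nra.
Qed.

Lemma lt0_of_prod (x y z : R) : x * y * z < 0 -> [\/ x < 0, y < 0 | z < 0].
Proof.
move=> xyz; have [x0|x0] := ltrP x 0; first by constructor 1.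
have [y0|y0] := ltrP y 0; first by constructor 2.
have [z0|z0] := ltrP z 0; first by constructor 3.
have : 0 <= x * y * z by rewrite !mulr_ge0.
lra.
Qed.

Lemma vertex_dots_prod_sign {O A B C} :
  nondeg_triangle A B C -> is_circumcenter O A B C ->
  exists2 k, 0 < k &
  pdot (vsub B A) (vsub C A) * pdot (vsub A B) (vsub C B) * pdot (vsub A C) (vsub B C)
  = k * (pdist O A ^+ 2 - pdist O (A + B + C - O - O) ^+ 2).
Proof.
move=> nd [OAB OBC]; have [sAB sBC sCA] := nondeg_triangle_sides nd.
set r := pdist O A ^+ 2.
have hA : pdot (A - O) (A - O) = r by rewrite /r pdistC pdist_sqr.
have hB : pdot (B - O) (B - O) = r by rewrite /r OAB pdistC pdist_sqr.
have hC : pdot (C - O) (C - O) = r by rewrite /r OAB OBC pdistC pdist_sqr.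
have r0 : 0 < r.
  rewrite exprn_gt0 // pdist_gt0; apply: contraTneq sAB => eOA.
  have : ~~ (0 < pdist O B) by rewrite -OAB eOA pdist_gt0 eqxx.
  by rewrite pdist_gt0 negbK -eOA => /eqP <-; rewrite subrr pdot_gt0 eqxx.
exists (pdot (B - A) (B - A) * pdot (C - B) (C - B) * pdot (A - C) (A - C) / (8 * r)).
  by apply: divr_gt0; [rewrite !mulr_gt0 | rewrite mulr_gt0].
have r8 : 8 * r != 0 by rewrite gt_eqF // mulr_gt0.
apply: (mulfI r8); rewrite (vertex_dots_prod hA hB hC) -/r.
by field; rewrite gt_eqF.
Qed.

Lemma acute_of_orthocenter_inside O A B C : nondeg_triangle A B C ->
  is_circumcenter O A B C -> pdist O (A + B + C - O - O) < pdist O A -> acute A B C.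
Proof.
move=> nd hO inside; have [k k0 prodE] := vertex_dots_prod_sign nd hO.
have [sAB sBC sCA] := nondeg_triangle_sides nd.
apply: gt0_of_pairwise_sums.
- by rewrite pdot_vertex_add.
- by rewrite pdotC (pdotC (vsub A C)) pdot_vertex_add.
- by rewrite (pdotC (vsub B A)) pdot_vertex_add.
- by rewrite prodE pmulr_rgt0 // subr_gt0 ltrXn2r ?pdist_ge0.
Qed.

Lemma obtuse_of_orthocenter_outside O A B C : nondeg_triangle A B C ->
  is_circumcenter O A B C -> pdist O A < pdist O (A + B + C - O - O) -> obtuse A B C.
Proof.
move=> nd hO outside; have [k k0 prodE] := vertex_dots_prod_sign nd hO.
by apply: lt0_of_prod; rewrite prodE pmulr_rlt0 // subr_lt0 ltrXn2r ?pdist_ge0.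
Qed.

Lemma acute_not_obtuse A B C : acute A B C -> ~ obtuse A B C.
Proof. by case=> dA dB dC [] ?; lra. Qed.

Definition semi_axis (K : conic R) : R :=
  match K with Ellipse _ _ a | Hyperbola _ _ a => a end.

Definition focal_sign (K : conic R) : R := if K is Ellipse _ _ _ then 1 else -1.

Definition foci (K : conic R) F G : Prop :=
  (F = focus1 K /\ G = focus2 K) \/ (F = focus2 K /\ G = focus1 K).

Lemma focal_sign_sqr K : focal_sign K ^+ 2 = 1.
Proof. by case: K => * /=; rewrite ?sqrrN expr1n. Qed.

Lemma conic_cases K : is_ellipse K \/ is_hyperbola K.
Proof. by case: K; [left | right]. Qed.

Lemma central_conic_foci {K F G} : central_conic K -> foci K F G ->
  [/\ 0 < semi_axis K, is_ellipse K -> pdist F G < 2 * semi_axis K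
    & is_hyperbola K -> 2 * semi_axis K < pdist F G].
Proof.
by case: K => F1 F2 a [a0 hF] [[-> ->] | [-> ->]]; rewrite ?(pdistC F2); split => // _.
Qed.

Lemma on_central_conic {K F G P} : central_conic K -> foci K F G -> on_conic K P ->
  [/\ P != F, P != G
    & (pdist P G + focal_sign K * pdist P F) ^+ 2 = (2 * semi_axis K) ^+ 2].
Proof.
case: K => F1 F2 a [a0 hF] hFG /= onK.
- have PF1 : P != F1.
    by apply: contraTneq hF => eP; rewrite -onK eP pdistxx add0r ltxx.
  have PF2 : P != F2.
    by apply: contraTneq hF => eP; rewrite -onK eP pdistxx addr0 pdistC ltxx.
  by case: hFG => -[-> ->]; split => //; rewrite mul1r -onK // addrC.
- have PF1 : P != F1.
    apply: contraTneq hF => eP.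
    by rewrite -onK eP pdistxx sub0r normrN ger0_norm ?pdist_ge0 ?ltxx.
  have PF2 : P != F2.
    apply: contraTneq hF => eP.
    by rewrite -onK eP pdistxx subr0 ger0_norm ?pdist_ge0 // pdistC ltxx.
  by case: hFG => -[-> ->]; rewrite -onK real_normK ?num_real //; split => //; ring.
Qed.

Lemma pdot_conic_normal K P d : P != focus1 K -> P != focus2 K ->
  pdist P (focus1 K) * pdist P (focus2 K) * pdot (conic_normal K P) d =
  pdist P (focus2 K) * pdot (P - focus1 K) d
  + focal_sign K * pdist P (focus1 K) * pdot (P - focus2 K) d.
Proof.
case: K => F1 F2 a /=; rewrite -!pdist_gt0 => p0 q0;
  rewrite /conic_normal /unitv -/(pdist P F1) -/(pdist P F2) /pdot /=;
  by field; rewrite !gt_eqF.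
Qed.

Lemma conic_tangency {K F G P d} : foci K F G -> P != F -> P != G ->
  pdot (conic_normal K P) d = 0 ->
  pdist P G * pdot (P - F) d + focal_sign K * pdist P F * pdot (P - G) d = 0.
Proof.
move=> [[-> ->] | [-> ->]] PF PG n0; first by rewrite -pdot_conic_normal // n0 mulr0.
have := pdot_conic_normal d PG PF; rewrite n0 mulr0.
move=> /esym/(congr1 (GRing.mul (focal_sign K))).
by rewrite mulr0 mulrDr !mulrA -expr2 focal_sign_sqr mul1r addrC.
Qed.

Lemma tangent_mirror_focus {K F G X Y} : central_conic K -> foci K F G ->
  tangent_line K X Y -> pdist F X = pdist F Y -> pdist (X + Y - F) G = 2 * semi_axis K.
Proof.
move=> hK hFG [XY [P [onK onXY nP]]] eqF.
have [PF PG onE] := on_central_conic hK hFG onK.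
have [a0 ellE hypE] := central_conic_foci hK hFG.
have neFG : pdot (G - F) (G - F) != (2 * semi_axis K) ^+ 2.
  rewrite -pdist_sqr pdistC eqrXn2 ?pdist_ge0 ?mulr_ge0 ?ltW //.
  by case: (conic_cases K) => [/ellE h | /hypE h]; rewrite ?(lt_eqF h) ?(gt_eqF h).
have := mirror_focus_dist (focal_sign_sqr K) PG XY onXY (conic_tangency hFG PF PG nP) eqF.
rewrite onE => /(_ neFG) mirrorE.
by rewrite /pdist vsubE mirrorE sqrtr_sqr ger0_norm // mulr_ge0 // ltW.
Qed.

End PlaneGeometry.

Theorem corollary2p2 (R : realType) (A B C : point R) (K : conic R) :
  nondeg_triangle A B C ->
  central_conic K ->
  circumscribed A B C K ->
  is_circumcenter (focus1 K) A B C \/ is_circumcenter (focus2 K) A B C ->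
  (acute A B C <-> is_ellipse K) /\ (obtuse A B C <-> is_hyperbola K).
Proof.
move=> nd hK [tAB tBC tCA] hO.
have [F [G [hFG hF]]] : exists F G, foci K F G /\ is_circumcenter F A B C.
  case: hO => hO; [exists (focus1 K), (focus2 K) | exists (focus2 K), (focus1 K)].
    by split => //; left.
  by split => //; right.
have [FAB FBC] := hF.
have mAB := tangent_mirror_focus hK hFG tAB FAB.
have mBC := tangent_mirror_focus hK hFG tBC FBC.
have mCA := tangent_mirror_focus hK hFG tCA (esym (etrans FAB FBC)).
have [eG FA] := mirror_circumcenter nd hF mAB mBC mCA.
have [_ ellE hypE] := central_conic_foci hK hFG; rewrite eG -FA in ellE hypE.
have acuteE := acute_of_orthocenter_inside nd hF.
have obtuseE := obtuse_of_orthocenter_outside nd hF.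
split; split.
- move=> acABC; case: (conic_cases K) => // /hypE/obtuseE.
  by move/(acute_not_obtuse acABC).
- by move/ellE/acuteE.
- move=> obABC; case: (conic_cases K) => // /ellE/acuteE.
  by move/acute_not_obtuse.
- by move/hypE/obtuseE.
Qed.
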